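(* Let $\widehat Q_\sigma$ be a component of the multivariate extension $\widehat Q$ of a query $Q$. There exists an optimal tree decomposition of $\widehat Q_\sigma$ (i.e., one whose width equals $\mathsf{w}(\widehat Q_\sigma)$) in which every bag is $Z$-prefix-closed.
   Context: A query is a full conjunctive query $Q = R_1(\mathbf X_1)\wedge\cdots\wedge R_k(\mathbf X_k)$. Multivariate extension: take fresh variables $Z_1,\dots,Z_k$; for a permutation $\sigma$ of $[k]$, the component $\widehat Q_\sigma$ replaces each atom $R_{\sigma_i}(\mathbf X_{\sigma_i})$ by $\widehat R_{\sigma_i}(Z_1,\dots,Z_i,\mathbf X_{\sigma_i})$. A set of variables $\mathbf Y$ of $\widehat Q_\sigma$ is $Z$-prefix-closed if for every $Z_i\in\mathbf Y$ we have $\{Z_1,\dots,Z_{i-1}\}\subseteq\mathbf Y$. Tree decomposition of a query $P$: a tree with bags of variables such that every atom schema is contained in some bag and the bags containing any variable form a connected subtree; its width is the maximum over bags $B$ of the fractional edge cover number of $P$ restricted to $B$ (each atom schema intersected with $B$); $\mathsf{w}(P)$ is the minimum width over all tree decompositions. *)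

From HB Require Import structures.
From mathcomp Require Import all_boot all_order all_algebra all_fingroup.
From mathcomp Require Import classical_sets reals.
Set Implicit Arguments. Unset Strict Implicit. Unset Printing Implicit Defensive.
Import Order.TTheory GRing.Theory Num.Theory.
Local Open Scope ring_scope.

(* A (full conjunctive) query / hypergraph over variables W with m atoms,
   given by the atom schemas H j : {set W}. *)

Definition qvars (W : finType) (m : nat) (H : 'I_m -> {set W}) : {set W} :=
  \bigcup_(j < m) H j.

Definition fec_feasible (R : realType) (W : finType) (m : nat)
  (H : 'I_m -> {set W}) (B : {set W}) (w : 'I_m -> R) : Prop :=
  (forall j, 0 <= w j) /\
  (forall v, v \in B -> 1 <= \sum_(j < m | v \in H j :&: B) w j).

Definition fec_number (R : realType) (W : finType) (m : nat)
  (H : 'I_m -> {set W}) (B : {set W}) : R :=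
  inf [set x : R | exists w : 'I_m -> R,
         fec_feasible H B w /\ x = \sum_(j < m) w j].

(* Tree on nodes 'I_n: n > 0, symmetric irreflexive edge relation,
   connected, with exactly n - 1 (undirected) edges. *)
Definition is_tree (n : nat) (e : rel 'I_n) : Prop :=
  (0 < n)%N /\ (forall a b, e a b = e b a) /\ (forall a, ~~ e a a) /\
  (forall a b, connect e a b) /\
  #|[set p : 'I_n * 'I_n | e p.1 p.2]| = (n.-1).*2.

Definition is_tree_decomp (W : finType) (m : nat) (H : 'I_m -> {set W})
  (n : nat) (e : rel 'I_n) (bag : 'I_n -> {set W}) : Prop :=
  is_tree e /\
  (forall u, bag u \subset qvars H) /\
  (forall j, exists u, H j \subset bag u) /\
  (forall x u v, x \in bag u -> x \in bag v ->
     connect [rel a b | [&& e a b, x \in bag a & x \in bag b]] u v).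

Definition td_width (R : realType) (W : finType) (m : nat)
  (H : 'I_m -> {set W}) (n : nat) (bag : 'I_n -> {set W}) : R :=
  \big[Num.max/0]_(u < n) fec_number R H (bag u).

Definition query_width (R : realType) (W : finType) (m : nat)
  (H : 'I_m -> {set W}) : R :=
  inf [set x : R | exists (n : nat) (e : rel 'I_n) (bag : 'I_n -> {set W}),
         is_tree_decomp H e bag /\ x = td_width R H bag].

(* Multivariate extension: variables are inl x (original) and inr i
   (Z_{i+1}, 0-indexed).  Component for permutation s: the atom at
   position i (0-indexed) has schema {Z_1..Z_{i+1}} u X_{s i}. *)
Definition mv_component (V : finType) (k : nat) (X : 'I_k -> {set V})
  (s : 'S_k) : 'I_k -> {set (V + 'I_k)%type} :=
  fun i => [set inr j | j in [set j : 'I_k | (j <= i)%N]] :|: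
           [set inl x | x in X (s i)].

Definition Z_prefix_closed (V : finType) (k : nat)
  (Y : {set (V + 'I_k)%type}) : Prop :=
  forall i j : 'I_k, inr i \in Y -> (j <= i)%N -> inr j \in Y.

(* A fractional edge cover of a bag that contains Z_i also covers every Z_j with
   j <= i, because each atom of the component containing Z_i contains all of
   Z_1, ..., Z_i.  Hence closing every bag of a tree decomposition under Z-prefixes
   does not increase its width.  The closure is still a tree decomposition: the
   last atom contains every Z, so some bag r contains every Z, and any bag whose
   closure contains Z_j (through some Z_i in the bag) is joined to r by a path of
   bags containing Z_i, hence Z_j after closure.  Since widths range over the
   finitely many values fec(B), an optimal decomposition exists; its closure is
   the required one. *)
From mathcomp Require Import all_boot all_order all_algebra all_fingroup.
From mathcomp Require Import classical_sets reals boolp zify.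
Set Implicit Arguments. Unset Strict Implicit. Unset Printing Implicit Defensive.
Import Order.TTheory GRing.Theory Num.Theory.
Local Open Scope ring_scope.

Lemma inf_eq_min (R : realType) (E : set R) x : E x -> lbound E x -> inf E = x.
Proof.
move=> Ex lbx; apply/le_anti; rewrite lb_le_inf ?andbT //; last by exists x.
by apply: ge_inf => //; exists x.
Qed.

Section FractionalEdgeCover.

Variables (R : realType) (W : finType) (m : nat) (H : 'I_m -> {set W}).

Lemma fec_feasible1 (B : {set W}) :
  B \subset qvars H -> fec_feasible H B (fun=> 1 : R).
Proof.
move=> BH; split=> [j|v vB]; first exact: ler01.
have /bigcupP[j _ vj] : v \in qvars H by apply: (fintype.subsetP BH).
rewrite (bigD1 j) /=; last by rewrite finset.in_setI vj vB.
by rewrite lerDl sumr_ge0.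
Qed.

Lemma fec_feasible_dominated (B B' : {set W}) (w : 'I_m -> R) :
  (forall v, v \in B' -> exists2 u, u \in B & forall j, u \in H j -> v \in H j) ->
  fec_feasible H B w -> fec_feasible H B' w.
Proof.
move=> dom [w_ge0 cover]; split=> // v vB'.
have [u uB uv] := dom v vB'.
apply: le_trans (cover u uB) _.
rewrite big_mkcond [X in _ <= X]big_mkcond; apply: ler_sum => j _.
rewrite !finset.in_setI uB vB' !andbT.
by case: ifP => [/uv -> //|_]; case: ifP.
Qed.

Lemma fec_number_dominated (B B' : {set W}) :
  B \subset qvars H ->
  (forall v, v \in B' -> exists2 u, u \in B & forall j, u \in H j -> v \in H j) ->
  fec_number R H B' <= fec_number R H B.
Proof.
move=> BH dom; apply: lb_le_inf.
  by exists (\sum_(j < m) 1); exists (fun=> 1); split; first exact: fec_feasible1.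
move=> _ [w [w_feas ->]]; apply: ge_inf; last first.
  by exists w; split; first exact: fec_feasible_dominated w_feas.
by exists 0 => _ [w' [[w'_ge0 _] ->]]; apply: sumr_ge0.
Qed.

Lemma td_width_ge0 n (bag : 'I_n -> {set W}) : 0 <= td_width R H bag.
Proof.
rewrite /td_width; elim/big_rec: _ => // u x _ x_ge0.
by rewrite le_max x_ge0 orbT.
Qed.

Lemma td_width_value n (bag : 'I_n -> {set W}) :
  exists o : option {set W}, td_width R H bag = oapp (fec_number R H) 0 o.
Proof.
apply: (big_ind (fun x => exists o, x = oapp (fec_number R H) 0 o)).
- by exists None.
- by move=> x y x_val y_val; rewrite maxEle; case: ifP.
- by move=> u _; exists (Some (bag u)).
Qed.

Lemma tree_decomp1 : is_tree_decomp H (fun _ _ : 'I_1 => false) (fun=> qvars H).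
Proof.
split; last split; last split.
- do 3!split=> //; split; first by move=> a b; rewrite (ord1 a) (ord1 b) connect0.
  by apply: eq_card0 => p; rewrite inE.
- by move=> _; apply: fintype.subxx.
- by move=> j; exists ord0; apply: (finset.bigcup_sup j).
- by move=> x a b _ _; rewrite (ord1 a) (ord1 b) connect0.
Qed.

Lemma query_width_le n (e : rel 'I_n) bag :
  is_tree_decomp H e bag -> query_width R H <= td_width R H bag.
Proof.
move=> td; apply: ge_inf; last by exists n, e, bag.
by exists 0 => _ [n' [e' [bag' [_ ->]]]]; apply: td_width_ge0.
Qed.

Lemma exists_optimal_tree_decomp :
  exists n (e : rel 'I_n) (bag : 'I_n -> {set W}),
    is_tree_decomp H e bag /\ td_width R H bag = query_width R H.
Proof.
pose val o := oapp (fec_number R H) 0 o.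
pose attained o := `[< exists n (e : rel 'I_n) bag,
                        is_tree_decomp H e bag /\ td_width R H bag = val o >].
have [o1 attained_o1] : exists o, attained o.
  have [o1 w1] := td_width_value (fun _ : 'I_1 => qvars H).
  exists o1; apply/asboolP; exists 1%N, (fun _ _ => false), (fun=> qvars H).
  by split; first exact: tree_decomp1.
case: (arg_minP val attained_o1) => o /asboolP[n [e [bag [td w_o]]]] o_min.
exists n, e, bag; split=> //; rewrite w_o; symmetry; apply: inf_eq_min.
  by exists n, e, bag; rewrite w_o.
move=> _ [n' [e' [bag' [td' ->]]]]; have [o' w_o'] := td_width_value bag'.
by rewrite w_o'; apply: o_min; apply/asboolP; exists n', e', bag'.
Qed.

End FractionalEdgeCover.

Section BagConnectivity.

Variables (W : finType) (n : nat) (e : rel 'I_n).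

Definition bag_rel (bag : 'I_n -> {set W}) x : rel 'I_n :=
  [rel a b | [&& e a b, x \in bag a & x \in bag b]].

Lemma connect_bag_rel_mono (bag1 bag2 : 'I_n -> {set W}) x y u v :
  (forall a, x \in bag1 a -> y \in bag2 a) ->
  connect (bag_rel bag1 x) u v -> connect (bag_rel bag2 y) u v.
Proof.
move=> xy; apply: connect_sub => a b /and3P[eab xa xb].
by apply: connect1; rewrite /bag_rel /= eab !xy.
Qed.

Lemma connect_bag_rel_hub (bag : 'I_n -> {set W}) x r u v :
  (forall a b, e a b = e b a) ->
  (forall a, x \in bag a -> connect (bag_rel bag x) a r) ->
  x \in bag u -> x \in bag v -> connect (bag_rel bag x) u v.
Proof.
move=> e_sym to_r xu xv; apply: connect_trans (to_r u xu) _.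
rewrite sym_connect_sym; first exact: to_r.
by move=> a b; rewrite /bag_rel /= e_sym; congr (_ && _); apply: andbC.
Qed.

End BagConnectivity.

Section ZPrefixClosure.

Variables (V : finType) (k : nat).
Implicit Types B : {set (V + 'I_k)%type}.

Definition Z_prefix_closure B : {set (V + 'I_k)%type} :=
  [set x | (x \in B) ||
     if x is inr j then [exists i, (inr i \in B) && (j <= i)%N] else false].

Lemma Z_prefix_closure_sub B : B \subset Z_prefix_closure B.
Proof. by apply/fintype.subsetP => x xB; rewrite inE xB. Qed.

Lemma in_Z_prefix_closure_inl B y : (inl y \in Z_prefix_closure B) = (inl y \in B).
Proof. by rewrite inE orbF. Qed.

Lemma in_Z_prefix_closure_inr B j :
  (inr j \in Z_prefix_closure B) = [exists i, (inr i \in B) && (j <= i)%N].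
Proof.
rewrite inE; apply/orP/idP => [[jB|//]|->]; last by right.
by apply/existsP; exists j; rewrite jB leqnn.
Qed.

Lemma Z_prefix_closure_closed B : Z_prefix_closed (Z_prefix_closure B).
Proof.
move=> i j; rewrite !in_Z_prefix_closure_inr => /existsP[l /andP[lB il]] ji.
by apply/existsP; exists l; rewrite lB (leq_trans ji il).
Qed.

Variables (X : 'I_k -> {set V}) (s : 'S_k).

Lemma inr_in_mv_component i l : (inr i \in mv_component X s l) = (i <= l)%N.
Proof.
rewrite finset.in_setU finset.mem_imset ?inE; last exact: inr_inj.
by case: (i <= l)%N => //=; apply/finset.imsetP => -[].
Qed.

Lemma fec_number_Z_prefix_closure (R : realType) B :
  B \subset qvars (mv_component X s) ->
  fec_number R (mv_component X s) (Z_prefix_closure B) <=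
  fec_number R (mv_component X s) B.
Proof.
move=> BH; apply: fec_number_dominated => // -[y|j].
  by rewrite in_Z_prefix_closure_inl => yB; exists (inl y).
rewrite in_Z_prefix_closure_inr => /existsP[i /andP[iB ji]].
exists (inr i) => // l; rewrite !inr_in_mv_component => il.
exact: leq_trans ji il.
Qed.

Lemma tree_decomp_Z_prefix_closure n (e : rel 'I_n) bag :
  is_tree_decomp (mv_component X s) e bag ->
  is_tree_decomp (mv_component X s) e (fun u => Z_prefix_closure (bag u)).
Proof.
move=> [tree [bag_vars [atom_cover run]]]; have [_ [e_sym _]] := tree.
split=> //; split; [|split].
- move=> u; apply/fintype.subsetP => -[y|j].
    by rewrite in_Z_prefix_closure_inl => /(fintype.subsetP (bag_vars u)).
  by move=> _; apply/bigcupP; exists j; rewrite // inr_in_mv_component.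
- move=> j; have [u atom_u] := atom_cover j; exists u.
  exact: fintype.subset_trans atom_u (Z_prefix_closure_sub _).
move=> [y|j] u v.
  rewrite !in_Z_prefix_closure_inl => yu yv.
  apply: connect_bag_rel_mono (run _ _ _ yu yv) => a.
  by rewrite in_Z_prefix_closure_inl.
have [r all_Z_r] : exists r, forall i, inr i \in bag r.
  have last_lt_k : (k.-1 < k)%N by have := ltn_ord j; lia.
  have [r last_r] := atom_cover (Ordinal last_lt_k); exists r => i.
  apply: (fintype.subsetP last_r); rewrite inr_in_mv_component /=.
  by have := ltn_ord i; lia.
apply: (connect_bag_rel_hub (r := r)) => // a.
rewrite in_Z_prefix_closure_inr => /existsP[i /andP[ia ji]].
apply: connect_bag_rel_mono (run _ _ _ ia (all_Z_r i)) => b ib.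
by rewrite in_Z_prefix_closure_inr; apply/existsP; exists i; rewrite ib ji.
Qed.

End ZPrefixClosure.

Theorem mainTheorem14 (R : realType) (V : finType) (k : nat)
  (X : 'I_k -> {set V}) (s : 'S_k) :
  exists (n : nat) (e : rel 'I_n) (bag : 'I_n -> {set (V + 'I_k)%type}),
    is_tree_decomp (mv_component X s) e bag /\
    td_width R (mv_component X s) bag = query_width R (mv_component X s) /\
    (forall u, Z_prefix_closed (bag u)).
Proof.
have [n [e [bag [td w_opt]]]] := exists_optimal_tree_decomp R (mv_component X s).
have td_closure := tree_decomp_Z_prefix_closure td.
exists n, e, (fun u => Z_prefix_closure (bag u)); split=> //; split; last first.
  by move=> u; apply: Z_prefix_closure_closed.
apply/le_anti; rewrite (query_width_le R td_closure) andbT -w_opt.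
apply: le_bigmax2 => u _; apply: fec_number_Z_prefix_closure.
by case: td => _ [].
Qed.
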